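(* There is a universal constant $C$ such that the following holds. Let $R>0$, $K>1$, $\Omega:=B(0,R)\setminus B(0,R/K)\subset\mathbb{R}^2$, and let $f\in L^\infty(\mathbb{R}^2)$ with $\operatorname{supp} f\subset\Omega$. Then for all $x,y\in\Omega$ with $x\ne y$, $$|v_r[f](x)-v_r[f](y)|+|v_\alpha[f](x)-v_\alpha[f](y)|\le CK\|f\|_{L^\infty}|x-y|\Big(1+\log\frac{R}{|x-y|}\Big).$$
   Context: For a vorticity $f$, $v[f](x)=\frac{1}{2\pi}\int_{\mathbb{R}^2}\frac{(x-y)^\perp}{|x-y|^2}f(y)\,dy$ with $(x_1,x_2)^\perp=(-x_2,x_1)$. The radial and angular components of the velocity at $x\neq0$ are $v_r[f](x)=\hat x\cdot v[f](x)$ and $v_\alpha[f](x)=\hat x^\perp\cdot v[f](x)$, where $\hat x=x/|x|$. *)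

From mathcomp Require Import all_boot all_order all_algebra.
From mathcomp Require Import all_classical all_reals all_analysis.
Set Implicit Arguments. Unset Strict Implicit. Unset Printing Implicit Defensive.
Import Order.TTheory GRing.Theory Num.Theory.
Local Open Scope ring_scope.

Section Defs.
Context {R : realType}.

Definition bs_leb2 := ((@lebesgue_measure R) \x (@lebesgue_measure R))%E.

Definition bs_norm (x : R * R) : R := Num.sqrt (x.1 ^+ 2 + x.2 ^+ 2).

Definition bs_dist (x y : R * R) : R := bs_norm (x.1 - y.1, x.2 - y.2).

(* Biot-Savart velocity v[f](x) = 1/(2 pi) int (x-y)^perp/|x-y|^2 f(y) dy,
   with (z1,z2)^perp = (-z2, z1). *)
Definition bs_v1 (f : R * R -> R) (x : R * R) : R :=
  (2 * pi)^-1 * Rintegral bs_leb2 setT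
    (fun y => (- (x.2 - y.2)) / (bs_dist x y) ^+ 2 * f y).
Definition bs_v2 (f : R * R -> R) (x : R * R) : R :=
  (2 * pi)^-1 * Rintegral bs_leb2 setT
    (fun y => (x.1 - y.1) / (bs_dist x y) ^+ 2 * f y).

Definition bs_vr (f : R * R -> R) (x : R * R) : R :=
  (x.1 / bs_norm x) * bs_v1 f x + (x.2 / bs_norm x) * bs_v2 f x.
Definition bs_valpha (f : R * R -> R) (x : R * R) : R :=
  (- (x.2 / bs_norm x)) * bs_v1 f x + (x.1 / bs_norm x) * bs_v2 f x.

(* Omega = B(0,rad) \ B(0,rad/K) with open balls. *)
Definition bs_annulus (rad K : R) : set (R * R) :=
  [set x | rad / K <= bs_norm x < rad].

Definition bs_Linf (f : R * R -> R) : \bar R :=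
  Lnorm bs_leb2 +oo%E (EFin \o f).

End Defs.

From mathcomp Require Import all_boot all_order all_algebra.
From mathcomp Require Import all_classical all_reals all_analysis.
From mathcomp Require Import measurable_realfun ring lra.
Import Order.TTheory GRing.Theory Num.Theory.
Local Open Scope ring_scope.
Local Open Scope classical_set_scope.
Set Implicit Arguments. Unset Strict Implicit. Unset Printing Implicit Defensive.

(* The velocity is v[f](x) = (2 pi)^-1 \int k(x, w) f(w) dw for the kernels
   k1(x, w) = -(x2 - w2) / |x - w|^2 and k2(x, w) = (x1 - w1) / |x - w|^2, which
   satisfy |k(x, w)| <= 1 / |x - w| and, when |x - w| >= 2 |x - y|,
   |k(x, w) - k(y, w)| <= 2 |x - y| / |x - w|^2.  Both singular weights are
   dominated pointwise by sums of indicators of squares centred at x: 1 / |x - w|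
   by a geometric series over squares of side ~ r / 2^k (total mass O(r)), and
   1 / |x - w|^2, on the range |x - y| <~ |x - w| <~ R, by the ~ log2 (R / |x - y|)
   squares of side 2^j |x - y| (mass O(1) each).  Splitting the integral where
   |x - w| ~ 2 |x - y| gives |v(x) - v(y)| <= C ||f|| |x - y| (1 + log (R / |x - y|))
   and |v(y)| <= C ||f|| R for x, y in B(0, R).  Finally v_r and v_alpha are the
   coordinates of v in the frame (x / |x|, (x / |x|)^perp), whose direction moves
   by at most 2 |x - y| / |x| <= 2 K |x - y| / R on the annulus: this is the
   factor K. *)

Section PlaneGeometry.
Context {R : realType}.
Implicit Types x y z w c : R * R.

Lemma sqrtr_le (a b : R) : 0 <= b -> a <= b ^+ 2 -> Num.sqrt a <= b.
Proof.
move=> b0 ab; rewrite -(ger0_norm b0) -sqrtr_sqr.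
have [a0|a0] := leP 0 a; first by rewrite ler_sqrt // sqr_ge0.
by rewrite ltr0_sqrtr // sqrtr_ge0.
Qed.

Lemma sqr_bs_dist x y : bs_dist x y ^+ 2 = (x.1 - y.1) ^+ 2 + (x.2 - y.2) ^+ 2.
Proof. by rewrite sqr_sqrtr // addr_ge0 // sqr_ge0. Qed.

Lemma bs_dist_ge0 x y : 0 <= bs_dist x y.
Proof. exact: sqrtr_ge0. Qed.

Lemma bs_distC x y : bs_dist x y = bs_dist y x.
Proof. by rewrite /bs_dist /bs_norm /= -(sqrrN (x.1 - _)) -(sqrrN (x.2 - _)) !opprB. Qed.

Lemma bs_norm_dist0 x : bs_norm x = bs_dist x (0, 0).
Proof. by rewrite /bs_dist /= !subr0; case: x. Qed.

Lemma bs_dist_ge_fst x y : `|x.1 - y.1| <= bs_dist x y.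
Proof. by rewrite -sqrtr_sqr ler_sqrt ?lerDl ?addr_ge0 ?sqr_ge0. Qed.

Lemma bs_dist_ge_snd x y : `|x.2 - y.2| <= bs_dist x y.
Proof. by rewrite -sqrtr_sqr ler_sqrt ?lerDr ?addr_ge0 ?sqr_ge0. Qed.

Lemma bs_norm_ge_fst x : `|x.1| <= bs_norm x.
Proof. by rewrite bs_norm_dist0; have := bs_dist_ge_fst x (0, 0); rewrite subr0. Qed.

Lemma bs_norm_ge_snd x : `|x.2| <= bs_norm x.
Proof. by rewrite bs_norm_dist0; have := bs_dist_ge_snd x (0, 0); rewrite subr0. Qed.

Lemma bs_dist_eq0 x y : bs_dist x y = 0 -> x = y.
Proof.
move=> d0; have := bs_dist_ge_fst x y; have := bs_dist_ge_snd x y.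
rewrite d0 !normr_le0 !subr_eq0 => /eqP e2 /eqP e1.
by case: x y e1 e2 {d0} => ? ? [? ?] /= -> ->.
Qed.

Lemma bs_dist_triangle x y z : bs_dist x z <= bs_dist x y + bs_dist y z.
Proof.
apply: sqrtr_le; first by rewrite addr_ge0 // bs_dist_ge0.
set a1 := x.1 - y.1; set a2 := x.2 - y.2; set b1 := y.1 - z.1; set b2 := y.2 - z.2.
have -> : x.1 - z.1 = a1 + b1 by rewrite /a1 /b1; ring.
have -> : x.2 - z.2 = a2 + b2 by rewrite /a2 /b2; ring.
have cauchy_schwarz : a1 * b1 + a2 * b2 <= bs_dist x y * bs_dist y z.
  rewrite /bs_dist /bs_norm /= -/a1 -/a2 -/b1 -/b2 -sqrtrM ?addr_ge0 ?sqr_ge0 //.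
  apply: le_trans (ler_norm _) _; rewrite -sqrtr_sqr ler_sqrt; last first.
    by rewrite mulr_ge0 // addr_ge0 // sqr_ge0.
  have := sqr_ge0 (a1 * b2 - a2 * b1); move=> ?; nra.
have -> : (a1 + b1) ^+ 2 + (a2 + b2) ^+ 2 =
  (a1 ^+ 2 + a2 ^+ 2) + (b1 ^+ 2 + b2 ^+ 2) + 2 * (a1 * b1 + a2 * b2) by ring.
rewrite -!sqr_bs_dist; lra.
Qed.

Lemma bs_dist_lt_ball x y (rad : R) :
  bs_norm x < rad -> bs_norm y < rad -> bs_dist x y < 2 * rad.
Proof.
rewrite !bs_norm_dist0 => hx hy.
by have := bs_dist_triangle x (0, 0) y; rewrite (bs_distC (0, 0)); lra.
Qed.

Lemma bs_norm_sub_le x y : `|bs_norm y - bs_norm x| <= bs_dist x y.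
Proof.
rewrite !bs_norm_dist0 ler_norml.
have := bs_dist_triangle x y (0, 0); have := bs_dist_triangle y x (0, 0).
by rewrite (bs_distC y x) => *; apply/andP; split; lra.
Qed.

Definition supdist c w : R := Num.max `|w.1 - c.1| `|w.2 - c.2|.

Lemma supdist_ge0 c w : 0 <= supdist c w.
Proof. by rewrite le_max normr_ge0. Qed.

Lemma supdist_le_dist c w : supdist c w <= bs_dist c w.
Proof. by rewrite ge_max bs_distC bs_dist_ge_fst bs_dist_ge_snd. Qed.

Lemma dist_le_supdist c w : bs_dist c w <= 2 * supdist c w.
Proof.
apply: sqrtr_le; first by rewrite mulr_ge0 // supdist_ge0.
have sqr_le (a : R) : `|a| <= supdist c w -> a ^+ 2 <= supdist c w ^+ 2.
  by move=> h; rewrite -real_normK ?num_real // lerXn2r ?nnegrE ?supdist_ge0.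
have h1 : (c.1 - w.1) ^+ 2 <= supdist c w ^+ 2 by rewrite sqr_le // distrC le_max lexx.
have h2 : (c.2 - w.2) ^+ 2 <= supdist c w ^+ 2.
  by rewrite sqr_le // distrC le_max lexx orbT.
have := sqr_ge0 (supdist c w); rewrite /=; lra.
Qed.

Lemma supdist_triangle x y w : supdist y w <= supdist x w + bs_dist x y.
Proof.
have h1 : `|w.1 - x.1| <= supdist x w by rewrite le_max lexx.
have h2 : `|w.2 - x.2| <= supdist x w by rewrite le_max lexx orbT.
have := bs_dist_ge_fst x y; have := bs_dist_ge_snd x y.
have := ler_distD x.1 w.1 y.1; have := ler_distD x.2 w.2 y.2.
by rewrite ge_max; move=> *; apply/andP; split; lra.
Qed.

Lemma supdist_lt_ball c w (rad : R) :
  bs_norm c < rad -> bs_norm w < rad -> supdist c w <= 2 * rad.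
Proof.
move=> hc hw; have := bs_norm_ge_fst c; have := bs_norm_ge_snd c.
have := bs_norm_ge_fst w; have := bs_norm_ge_snd w.
have := ler_normB w.1 c.1; have := ler_normB w.2 c.2.
by rewrite ge_max; move=> *; apply/andP; split; lra.
Qed.

End PlaneGeometry.

Section DyadicScales.
Context {R : realType}.

Lemma exists_dyadic_lt (t r : R) : 0 < t -> 0 < r -> exists n : nat, r / 2 ^+ n.+1 < t.
Proof.
move=> t0 r0; have := archi_boundP (ltW (divr_gt0 r0 t0)).
set n := Num.bound _ => hn; exists n.
have n_lt : (n%:R : R) < 2 ^+ n.+1.
  rewrite -natrX ltr_nat; apply: (ltn_trans (@ltn_expl 2 n isT)).
  by rewrite ltn_exp2l.
by rewrite ltr_pdivrMr ?exprn_gt0 // mulrC -ltr_pdivrMr // (lt_trans hn n_lt).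
Qed.

Lemma exists_dyadic_halving (t r : R) : 0 < t -> t <= r ->
  exists k : nat, t <= r / 2 ^+ k /\ r / 2 ^+ k < 2 * t.
Proof.
move=> t0 tr; have r0 : 0 < r by apply: lt_le_trans tr.
case: (ex_minnP (exists_dyadic_lt t0 r0)) => k hk hmin; exists k; split.
  case: k hk hmin => [|k] hk hmin; first by rewrite expr0 divr1.
  by rewrite leNgt; apply/negP => /hmin; rewrite ltnn.
have -> : r / 2 ^+ k = 2 * (r / 2 ^+ k.+1) by rewrite exprS; field; rewrite expf_neq0.
lra.
Qed.

Lemma exists_dyadic_doubling (t a : R) (N : nat) : 0 < a -> a <= t -> t <= 2 ^+ N * a ->
  exists j : nat, (j <= N)%N /\ t <= 2 ^+ j * a /\ 2 ^+ j * a <= 2 * t.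
Proof.
move=> a0 at_ tN.
case: (@ex_minnP (fun j => t <= 2 ^+ j * a)) => [|j hj hmin]; first by exists N.
exists j; split; first exact: hmin.
split => //; case: j hj hmin => [|j] hj hmin; first by rewrite expr0 mul1r; lra.
have : ~~ (t <= 2 ^+ j * a) by apply/negP => /hmin; rewrite ltnn.
by rewrite -ltNge exprS => h; lra.
Qed.

End DyadicScales.

Section SquareIndicators.
Context {R : realType}.
Implicit Types c w : R * R.

Definition sqbox c (s : R) : set (R * R) :=
  `[c.1 - s, c.1 + s] `*` `[c.2 - s, c.2 + s].

Lemma measurable_sqbox c s : measurable (sqbox c s).
Proof. by apply: measurableX; apply: measurable_itv. Qed.

Lemma sqbox_supdist c s w : supdist c w <= s -> sqbox c s w.
Proof. by rewrite ge_max /sqbox /= !in_itv /= !ler_distl => /andP[-> ->]. Qed.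

Lemma bs_leb2_sqbox c s : 0 <= s -> bs_leb2 (sqbox c s) = ((2 * s) ^+ 2)%:E.
Proof.
move=> s0; rewrite /bs_leb2 /sqbox product_measure1E; try exact: measurable_itv.
rewrite /= !lebesgue_measure_itv /=.
have [->|sp] := eqVneq s 0; first by rewrite !subr0 !addr0 !ltxx mul0e mulr0 expr0n.
have sp' : 0 < s by rewrite lt_def sp s0.
rewrite !lte_fin !ltrBlDr -!addrA !ltrDl addr_gt0 // -!EFinD -EFinM; congr EFin; ring.
Qed.

Local Open Scope ereal_scope.

Definition boxw c (s m : R) (w : R * R) : \bar R := (m * \1_(sqbox c s) w)%:E.

Lemma boxw_ge0 c s m w : (0 <= m)%R -> 0 <= boxw c s m w.
Proof. by move=> m0; rewrite lee_fin mulr_ge0 ?indic_ge0. Qed.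

Lemma measurable_boxw c s m : measurable_fun setT (boxw c s m).
Proof.
apply/measurable_EFinP; apply: measurable_funM; first exact: measurable_cst.
by apply: measurable_indic; exact: measurable_sqbox.
Qed.

Lemma boxw_supdist c s m w : (supdist c w <= s)%R -> boxw c s m w = m%:E.
Proof. by move=> h; rewrite /boxw indicE (mem_set (sqbox_supdist h)) mulr1. Qed.

Lemma integral_boxw c s m : (0 <= s)%R -> (0 <= m)%R ->
  \int[bs_leb2]_w boxw c s m w = (m * (2 * s) ^+ 2)%:E.
Proof.
move=> s0 m0; under eq_integral do rewrite /boxw EFinM.
rewrite ge0_integralZl_EFin //.
- rewrite integral_indic ?setIT; last exact: measurable_sqbox.
  transitivity (m%:E * bs_leb2 (sqbox c s)); first by [].
  by rewrite bs_leb2_sqbox // -EFinM.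
- exact: measurableT.
- by apply: measurableT_comp => //; apply: measurable_indic; exact: measurable_sqbox.
Qed.

End SquareIndicators.

Section LogarithmicCount.
Context {R : realType}.

Lemma ln2_lt1 : ln (2 : R) < 1.
Proof.
have e_gt2 : 2 < expR (1 : R) by have := @expR_gt1Dx R 1 (oner_neq0 _); lra.
by rewrite -[X in _ < X](expRK 1) ltr_ln ?posrE ?expR_gt0.
Qed.

Lemma log_term_ge (rad d : R) : 0 < d -> d <= 2 * rad -> 1 - ln 2 <= 1 + ln (rad / d).
Proof.
move=> d0 drad; have rad0 : 0 < rad by lra.
rewrite lerD2l -lnV ?posrE // ler_ln ?posrE ?invr_gt0 ?divr_gt0 //.
by rewrite ler_pdivlMr //; lra.
Qed.

Definition dyadic_log_const : R := 2 / (1 - ln 2) + (ln 2)^-1.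

Lemma exists_dyadic_cover_log (rad d : R) : 0 < d -> d < 2 * rad ->
  exists N : nat, rad <= 2 ^+ N * d /\ N.+1%:R <= dyadic_log_const * (1 + ln (rad / d)).
Proof.
move=> d0 drad; have rad0 : 0 < rad by lra.
have [n hn] := exists_dyadic_lt d0 rad0.
have [N cover Nmin] : exists2 N : nat, rad <= 2 ^+ N * d &
    (forall n, rad <= 2 ^+ n * d -> (N <= n)%N).
  have exN : exists N, rad <= 2 ^+ N * d.
    by exists n.+1; rewrite -ler_pdivrMl ?exprn_gt0 // mulrC ltW.
  by case: (ex_minnP exN) => N; exists N.
exists N; split => //; set L := 1 + ln (rad / d).
have l2_gt0 : 0 < ln (2 : R) by rewrite ln_gt0 // ltr1n.
have c0_gt0 : 0 < 1 - ln (2 : R) by rewrite subr_gt0 ln2_lt1.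
have L_ge : 1 - ln 2 <= L by rewrite log_term_ge // ltW.
have L_c0 : 1 <= L / (1 - ln 2) by rewrite ler_pdivlMr // mul1r.
have -> : dyadic_log_const * L = 2 * (L / (1 - ln 2)) + L / ln 2.
  by rewrite /dyadic_log_const; field; rewrite !gt_eqF.
have L_ln2_ge0 : 0 <= L / ln 2.
  by apply: divr_ge0; [exact: le_trans (ltW c0_gt0) L_ge | exact: ltW].
case: N cover Nmin => [|n'] _ Nmin.
  by move: (L / (1 - ln 2)) (L / ln 2) L_c0 L_ln2_ge0 => u v u_ge v_ge; clear -u_ge v_ge; lra.
have below : 2 ^+ n' * d < rad by rewrite ltNge; apply/negP => /Nmin; rewrite ltnn.
have n'_lt : n'%:R * ln 2 < L - 1.
  rewrite /L addrC addKr mulr_natl -lnXn //.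
  by rewrite ltr_ln ?posrE ?exprn_gt0 ?divr_gt0 // ltr_pdivlMr.
have n'_le : n'%:R <= L / ln 2.
  by rewrite ler_pdivlMr // ltW // (lt_trans n'_lt) // ltrBlDr ltrDl.
rewrite -addn2 natrD.
by move: (L / (1 - ln 2)) (L / ln 2) L_c0 n'_le => u v u_ge v_ge; clear -u_ge v_ge; lra.
Qed.

End LogarithmicCount.

Section DyadicMajorants.
Context {R : realType}.
Implicit Types c w : R * R.
Local Open Scope ereal_scope.

Definition invdist_majorant c (r : R) w : \bar R :=
  \sum_(k <oo) boxw c (r / 2 ^+ k) (2 * 2 ^+ k / r) w.

Definition invsqdist_majorant c (a : R) (N : nat) w : \bar R :=
  \sum_(0 <= j < N.+1) boxw c (2 ^+ j * a) (4 / (2 ^+ j * a) ^+ 2) w.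

Section InvDist.
Variables (c : R * R) (r : R).
Hypothesis r0 : (0 < r)%R.

Let term_ge0 k w : 0 <= boxw c (r / 2 ^+ k) (2 * 2 ^+ k / r) w.
Proof. by apply: boxw_ge0; rewrite divr_ge0 ?mulr_ge0 ?exprn_ge0 // ltW. Qed.

Lemma invdist_majorant_ge0 w : 0 <= invdist_majorant c r w.
Proof. by apply: nneseries_ge0 => k *; exact: term_ge0. Qed.

Lemma measurable_invdist_majorant : measurable_fun setT (invdist_majorant c r).
Proof.
by apply: (@ge0_emeasurable_sum _ _ R setT) => // k _; exact: measurable_boxw.
Qed.

Lemma integral_invdist_majorant : \int[bs_leb2]_w invdist_majorant c r w = (16 * r)%:E.
Proof.
rewrite integral_nneseries //; last by move=> k; exact: measurable_boxw.
transitivity (\sum_(k <oo) ((16 * r) / (2 ^ (k + 1))%:R)%:E).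
  apply: eq_eseriesr => k _; rewrite integral_boxw ?divr_ge0 ?exprn_ge0 ?ltW //.
  congr EFin; rewrite natrX exprD expr1.
  by field; rewrite expf_neq0 ?gt_eqF.
have := @cvg_geometric_eseries_half R (16 * r)%R 0.
by rewrite expr0 divr1 => /cvg_lim <-.
Qed.

(* The k-th square has side ~ r / 2^k and height ~ 2^k / r, so the series
   dominates 1 / |c - w| at every scale below r. *)
Lemma invdist_le_majorant w : (supdist c w <= r)%R ->
  ((bs_dist c w)^-1)%:E <= invdist_majorant c r w.
Proof.
move=> wr; set t := supdist c w.
have [d0|dpos] := eqVneq (bs_dist c w) 0%R.
  by rewrite d0 invr0; exact: invdist_majorant_ge0.
have t0 : (0 < t)%R.
  have := dist_le_supdist c w; have := bs_dist_ge0 c w; rewrite -/t.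
  by rewrite le_eqVlt eq_sym (negbTE dpos) /=; lra.
have [k [tk kt]] := exists_dyadic_halving t0 wr.
apply: (@le_trans _ _ (boxw c (r / 2 ^+ k) (2 * 2 ^+ k / r) w)).
  rewrite boxw_supdist // lee_fin.
  have q0 : (0 < r / 2 ^+ k)%R by rewrite divr_gt0 // exprn_gt0.
  have -> : (2 * 2 ^+ k / r = 2 / (r / 2 ^+ k))%R by field; rewrite expf_neq0 // gt_eqF.
  rewrite -(div1r (bs_dist c w)) ler_pdivrMr ?lt_def ?dpos ?bs_dist_ge0 //.
  rewrite mulrAC ler_pdivlMr // mul1r.
  by have := supdist_le_dist c w; rewrite -/t; lra.
by rewrite /invdist_majorant (@nneseriesD1 _ _ k) // leeDl // nneseries_ge0.
Qed.

End InvDist.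

Section InvSqDist.
Variables (c : R * R) (a : R) (N : nat).
Hypothesis a0 : (0 < a)%R.

Let weight_ge0 j : (0 <= 4 / (2 ^+ j * a) ^+ 2)%R.
Proof. by rewrite divr_ge0 // sqr_ge0. Qed.

Let term_ge0 j w : 0 <= boxw c (2 ^+ j * a) (4 / (2 ^+ j * a) ^+ 2) w.
Proof. by apply: boxw_ge0; exact: weight_ge0. Qed.

Lemma invsqdist_majorant_ge0 w : 0 <= invsqdist_majorant c a N w.
Proof. by apply: sume_ge0 => j _; exact: term_ge0. Qed.

Lemma measurable_invsqdist_majorant : measurable_fun setT (invsqdist_majorant c a N).
Proof. by apply: emeasurable_sum => j; exact: measurable_boxw. Qed.

Lemma integral_invsqdist_majorant :
  \int[bs_leb2]_w invsqdist_majorant c a N w = (16 * N.+1%:R)%:E.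
Proof.
rewrite ge0_integral_sum //; last by move=> j; exact: measurable_boxw.
transitivity (\sum_(0 <= j < N.+1) (16 : R)%:E).
  apply: eq_bigr => j _.
  have s0 : (0 <= 2 ^+ j * a)%R by rewrite mulr_ge0 ?exprn_ge0 ?ltW.
  rewrite (@integral_boxw _ c _ _ s0 (weight_ge0 j)).
  by congr EFin; field; rewrite ?expf_neq0 ?gt_eqF.
transitivity ((\sum_(0 <= j < N.+1) (16 : R))%:E).
  by rewrite (@sumEFin R nat (index_iota 0 N.+1) xpredT (fun=> 16%R)).
by rewrite sumr_const_nat subn0 mulr_natr.
Qed.

Lemma invsqdist_le_majorant w :
  (a <= supdist c w)%R -> (supdist c w <= 2 ^+ N * a)%R ->
  ((bs_dist c w ^+ 2)^-1)%:E <= invsqdist_majorant c a N w.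
Proof.
move=> aw wN; set t := supdist c w in aw wN.
have [j [jN [tj jt]]] := exists_dyadic_doubling a0 aw wN.
have dt : (t <= bs_dist c w)%R by exact: supdist_le_dist.
apply: (@le_trans _ _ (boxw c (2 ^+ j * a) (4 / (2 ^+ j * a) ^+ 2) w)).
  rewrite boxw_supdist // lee_fin.
  have q0 : (0 < 2 ^+ j * a)%R by rewrite mulr_gt0 // exprn_gt0.
  have d0 : (0 < bs_dist c w ^+ 2)%R by rewrite exprn_gt0 //; lra.
  rewrite -(div1r (bs_dist c w ^+ 2)) ler_pdivrMr // mulrAC ler_pdivlMr ?exprn_gt0 //.
  by rewrite mul1r; nra.
rewrite /invsqdist_majorant (bigD1_seq j) ?mem_index_iota ?ltnS ?iota_uniq //=.
by rewrite leeDl // sume_ge0.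
Qed.

End InvSqDist.

End DyadicMajorants.

Section BiotSavartKernel.
Context {R : realType}.
Implicit Types x y w : R * R.

Definition bs_kernel1 x w : R := - (x.2 - w.2) / bs_dist x w ^+ 2.
Definition bs_kernel2 x w : R := (x.1 - w.1) / bs_dist x w ^+ 2.

Lemma normr_div_sqr_le (u d : R) : 0 <= d -> `|u| <= d -> `|u / d ^+ 2| <= d^-1.
Proof.
move=> d0 ud; have [->|dn0] := eqVneq d 0; first by rewrite expr2 mulr0 invr0 mulr0 normr0.
have dpos : 0 < d by rewrite lt_def dn0 d0.
rewrite normrM normfV (ger0_norm (sqr_ge0 d)) ler_pdivrMr ?exprn_gt0 //.
by rewrite expr2 mulrA mulVf // mul1r.
Qed.

Lemma bs_kernel1_le x w : `|bs_kernel1 x w| <= (bs_dist x w)^-1.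
Proof. by rewrite normr_div_sqr_le ?bs_dist_ge0 // normrN bs_dist_ge_snd. Qed.

Lemma bs_kernel2_le x w : `|bs_kernel2 x w| <= (bs_dist x w)^-1.
Proof. by rewrite normr_div_sqr_le ?bs_dist_ge0 ?bs_dist_ge_fst. Qed.

(* The kernel is the inversion z |-> z^perp / |z|^2, so its increment has
   length |x - y| / (|x - w| |y - w|). *)
Lemma sqr_bs_kernel_sub x y w : bs_dist x w != 0 -> bs_dist y w != 0 ->
  (bs_kernel1 x w - bs_kernel1 y w) ^+ 2 + (bs_kernel2 x w - bs_kernel2 y w) ^+ 2 =
  (bs_dist x y / (bs_dist x w * bs_dist y w)) ^+ 2.
Proof.
move=> hx hy; rewrite expr_div_n exprMn /bs_kernel1 /bs_kernel2.
have hx2 : bs_dist x w ^+ 2 != 0 by rewrite expf_neq0.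
have hy2 : bs_dist y w ^+ 2 != 0 by rewrite expf_neq0.
move: hx2 hy2; rewrite !sqr_bs_dist => hx2 hy2.
by field; rewrite hx2 hy2.
Qed.

Lemma bs_kernel_sub_far x y w : 0 < bs_dist x y -> 2 * bs_dist x y <= bs_dist x w ->
  `|bs_kernel1 x w - bs_kernel1 y w| <= 2 * bs_dist x y / bs_dist x w ^+ 2 /\
  `|bs_kernel2 x w - bs_kernel2 y w| <= 2 * bs_dist x y / bs_dist x w ^+ 2.
Proof.
move=> d0 far; have := bs_dist_triangle x y w => tri.
have xw0 : 0 < bs_dist x w by lra.
have yw0 : 0 < bs_dist y w by lra.
have e := sqr_bs_kernel_sub (lt0r_neq0 xw0) (lt0r_neq0 yw0).
have le_incr : bs_dist x y / (bs_dist x w * bs_dist y w) <= 2 * bs_dist x y / bs_dist x w ^+ 2.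
  rewrite ler_pdivrMr ?mulr_gt0 // mulrAC ler_pdivlMr ?exprn_gt0 // expr2.
  have : 0 <= bs_dist x y * bs_dist x w * (2 * bs_dist y w - bs_dist x w).
    by apply: mulr_ge0; [rewrite mulr_ge0 // ltW | rewrite subr_ge0; lra].
  nra.
have incr0 : 0 <= bs_dist x y / (bs_dist x w * bs_dist y w).
  by rewrite divr_ge0 ?mulr_ge0 ?bs_dist_ge0.
split; apply: le_trans le_incr; rewrite -sqrtr_sqr; apply: sqrtr_le => //; rewrite -e.
  by rewrite lerDl sqr_ge0.
by rewrite lerDr sqr_ge0.
Qed.

Lemma measurable_inv_sqr_bs_dist x : measurable_fun setT (fun w => (bs_dist x w ^+ 2)^-1).
Proof.
have -> : (fun w => (bs_dist x w ^+ 2)^-1) =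
    (fun w => ((x.1 - w.1) ^+ 2 + (x.2 - w.2) ^+ 2) `^ (-1)).
  by apply/funext => w; rewrite sqr_bs_dist powR_inv1 // addr_ge0 // sqr_ge0.
apply: (measurableT_comp (@measurable_powR R (-1))).
by apply: measurable_funD; apply: measurable_funX; apply: measurable_funB;
  [exact: measurable_cst | exact: measurable_fst | exact: measurable_cst | exact: measurable_snd].
Qed.

Lemma measurable_bs_kernel1 x : measurable_fun setT (bs_kernel1 x).
Proof.
apply: measurable_funM; last exact: measurable_inv_sqr_bs_dist.
by apply: measurable_funN; apply: measurable_funB; [exact: measurable_cst|exact: measurable_snd].
Qed.

Lemma measurable_bs_kernel2 x : measurable_fun setT (bs_kernel2 x).
Proof.
apply: measurable_funM; last exact: measurable_inv_sqr_bs_dist.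
by apply: measurable_funB; [exact: measurable_cst|exact: measurable_fst].
Qed.

End BiotSavartKernel.

Section MajorizedIntegrals.
Context {R : realType}.
Local Open Scope ereal_scope.

Lemma ae_mono d (T : measurableType d) (mu : measure T R) (P Q : T -> Prop) :
  (forall w, P w -> Q w) -> {ae mu, forall w, P w} -> {ae mu, forall w, Q w}.
Proof.
by move=> PQ [N [mN N0 NP]]; exists N; split => // w /= nw; apply: NP => /= /PQ.
Qed.

Lemma Rintegral_majorant d (T : measurableType d) (mu : measure T R)
    (h : T -> R) (G : T -> \bar R) (B : R) :
  measurable_fun setT h -> (forall w, 0 <= G w) -> measurable_fun setT G ->
  {ae mu, forall w, (`|h w|)%:E <= G w} -> \int[mu]_w G w = B%:E ->
  mu.-integrable setT (EFin \o h) /\ (`|Rintegral mu setT h| <= B)%R.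
Proof.
move=> mh G0 mG hG iG.
have mh' : measurable_fun setT (EFin \o h) by apply/measurable_EFinP.
have le_B : \int[mu]_w `|(EFin \o h) w| <= B%:E.
  rewrite -iG; apply: ae_ge0_le_integral => //; first exact: measurableT_comp.
  by apply: ae_mono hG => w hw _.
have ih : mu.-integrable setT (EFin \o h).
  by apply/integrableP; split => //; apply: le_lt_trans le_B _; exact: ltry.
split => //; have := le_abse_integral mu measurableT mh'.
rewrite /Rintegral; move: (integrable_fin_num measurableT ih).
case: (\int[_]_(_ in _) _) => [r| |] //= _ hr.
by rewrite -lee_fin; apply: le_trans hr le_B.
Qed.

Lemma bs_leb2T_gt0 : 0 < bs_leb2 [set: R * R].
Proof.
apply: (@lt_le_trans _ _ (bs_leb2 (sqbox (0%R, 0%R) 1%R))).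
  by rewrite bs_leb2_sqbox // lte_fin exprn_gt0 // mulr_gt0.
by apply: le_measure; rewrite ?inE //; exact: measurable_sqbox.
Qed.

Lemma bs_Linf_ae_bound (f : R * R -> R) : bs_Linf f < +oo ->
  (0 <= fine (bs_Linf f))%R /\ {ae bs_leb2, forall w, (`|f w| <= fine (bs_Linf f))%R}.
Proof.
rewrite /bs_Linf unlock /= (_ : (0 < _)%E = true); last exact: bs_leb2T_gt0.
set L := ess_sup_inf.ess_sup _ _ => Lfin.
have L0 : 0 <= L.
  apply: ess_sup_inf.ess_sup_gee; first exact: bs_leb2T_gt0.
  by apply: aeW => w /=; rewrite lee_fin normr_ge0.
have LE : L = (fine L)%:E by rewrite fineK // ge0_fin_numE.
split; first by rewrite -lee_fin -LE.
apply: ae_mono (ess_sup_inf.ess_sup_ge bs_leb2 (abse \o (EFin \o f))) => w /=.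
by rewrite -lee_fin -LE.
Qed.

End MajorizedIntegrals.

Section KernelMajorants.
Context {R : realType}.
Implicit Types x y w : R * R.
Local Open Scope ereal_scope.

Lemma kernel_term_le_majorant (kv fv M r : R) x w : (0 <= M)%R -> (0 < r)%R ->
  (`|kv| <= (bs_dist x w)^-1)%R -> (`|fv| <= M)%R ->
  (fv != 0%R -> (supdist x w <= r)%R) ->
  (`|kv * fv|)%:E <= M%:E * invdist_majorant x r w.
Proof.
move=> M0 r0 hk hf hsupp.
have [->|fv0] := eqVneq fv 0%R.
  by rewrite mulr0 normr0 mule_ge0 ?invdist_majorant_ge0.
rewrite normrM EFinM muleC; apply: lee_pmul => //.
by apply: le_trans (invdist_le_majorant r0 (hsupp fv0)); rewrite lee_fin.
Qed.

Definition kernel_sub_majorant x y (d : R) (N : nat) w : \bar R :=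
  invdist_majorant x (2 * d) w + invdist_majorant y (3 * d) w +
  (2 * d)%:E * invsqdist_majorant x (2 * d) N w.

Section KernelSubMajorant.
Variables (x y : R * R) (d : R) (N : nat).
Hypothesis d0 : (0 < d)%R.

Let d2 : (0 < 2 * d)%R. Proof. by rewrite mulr_gt0. Qed.
Let d3 : (0 < 3 * d)%R. Proof. by rewrite mulr_gt0. Qed.

Lemma kernel_sub_majorant_ge0 w : 0 <= kernel_sub_majorant x y d N w.
Proof.
rewrite !adde_ge0 ?mule_ge0 ?invdist_majorant_ge0 ?invsqdist_majorant_ge0 //.
by rewrite lee_fin ltW.
Qed.

Lemma measurable_kernel_sub_majorant : measurable_fun setT (kernel_sub_majorant x y d N).
Proof.
apply: emeasurable_funD; first apply: emeasurable_funD.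
- exact: measurable_invdist_majorant.
- exact: measurable_invdist_majorant.
- by apply: measurable_funeM; exact: measurable_invsqdist_majorant.
Qed.

Lemma integral_kernel_sub_majorant :
  \int[bs_leb2]_w kernel_sub_majorant x y d N w = (d * (80 + 32 * N.+1%:R))%:E.
Proof.
rewrite ge0_integralD //; first last.
- by apply: measurable_funeM; exact: measurable_invsqdist_majorant.
- by move=> w _; rewrite mule_ge0 ?invsqdist_majorant_ge0 // lee_fin ltW.
- by apply: emeasurable_funD; exact: measurable_invdist_majorant.
- by move=> w _; rewrite adde_ge0 ?invdist_majorant_ge0.
rewrite ge0_integralD //; first last.
- exact: measurable_invdist_majorant.
- by move=> w _; exact: invdist_majorant_ge0.
- exact: measurable_invdist_majorant.
- by move=> w _; exact: invdist_majorant_ge0.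
rewrite !integral_invdist_majorant // ge0_integralZl //; first last.
- by rewrite lee_fin ltW.
- by move=> w _; exact: invsqdist_majorant_ge0.
- exact: measurable_invsqdist_majorant.
by rewrite integral_invsqdist_majorant // -EFinM -!EFinD; congr EFin; ring.
Qed.

End KernelSubMajorant.

(* Where w is close to x (in sup-distance, below 2|x - y|) the two kernels are
   bounded separately; farther away the smoothness estimate is used. *)
Lemma kernel_sub_term_le_majorant (kx ky fv M : R) N x y w :
  (0 <= M)%R -> (0 < bs_dist x y)%R ->
  (`|kx| <= (bs_dist x w)^-1)%R -> (`|ky| <= (bs_dist y w)^-1)%R ->
  ((2 * bs_dist x y <= bs_dist x w)%R ->
     (`|kx - ky| <= 2 * bs_dist x y / bs_dist x w ^+ 2)%R) ->
  (`|fv| <= M)%R -> (fv != 0%R -> (supdist x w <= 2 ^+ N * (2 * bs_dist x y))%R) ->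
  (`|(kx - ky) * fv|)%:E <= M%:E * kernel_sub_majorant x y (bs_dist x y) N w.
Proof.
set d := bs_dist x y => M0 d0 hkx hky hfar hf hsupp.
have S0 := @kernel_sub_majorant_ge0 x y d N d0 w.
have [->|fv0] := eqVneq fv 0%R; first by rewrite mulr0 normr0 mule_ge0.
rewrite normrM EFinM muleC; apply: lee_pmul => //.
have Fin0 : 0 <= (2 * d)%:E * invsqdist_majorant x (2 * d) N w.
  by rewrite mule_ge0 ?invsqdist_majorant_ge0 // lee_fin mulr_ge0 // ltW.
have [d2 d3] : (0 < 2 * d)%R /\ (0 < 3 * d)%R by rewrite !mulr_gt0.
have [near|far] := ltP (supdist x w) (2 * d)%R.
  have near_y : (supdist y w <= 3 * d)%R by have := supdist_triangle x y w; rewrite -/d; lra.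
  apply: (@le_trans _ _ ((`|kx| + `|ky|)%:E)); first by rewrite lee_fin ler_normB.
  rewrite /kernel_sub_majorant -[X in X <= _]adde0 leeD // EFinD.
  apply: leeD; [apply: le_trans (invdist_le_majorant d2 (ltW near)) |
                apply: le_trans (invdist_le_majorant d3 near_y)]; by rewrite lee_fin.
have far_dist : (2 * d <= bs_dist x w)%R := le_trans far (supdist_le_dist x w).
have := invsqdist_le_majorant d2 far (hsupp fv0) => hsq.
apply: (@le_trans _ _ ((2 * d)%:E * invsqdist_majorant x (2 * d) N w)).
  apply: le_trans (lee_wpmul2l _ hsq); last by rewrite lee_fin ltW.
  by rewrite -EFinM lee_fin hfar.
by apply: leeDr; apply: adde_ge0; apply: invdist_majorant_ge0.
Qed.

End KernelMajorants.

Definition kernel_sub_const {R : realType} : R := 80 / (1 - ln 2) + 32 * dyadic_log_const.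

Section SingularIntegral.
Context {R : realType}.
Implicit Types x y w : R * R.

Variable k : R * R -> R * R -> R.
Hypothesis measurable_k : forall x, measurable_fun setT (k x).
Hypothesis k_le : forall x w, `|k x w| <= (bs_dist x w)^-1.
Hypothesis k_sub_far : forall x y w, 0 < bs_dist x y -> 2 * bs_dist x y <= bs_dist x w ->
  `|k x w - k y w| <= 2 * bs_dist x y / bs_dist x w ^+ 2.

Variables (f : R * R -> R) (M rad : R).
Hypotheses (M0 : 0 <= M) (rad0 : 0 < rad) (mf : measurable_fun setT f).
Hypothesis f_le : {ae bs_leb2, forall w, `|f w| <= M}.
Hypothesis f_supp : forall w, f w != 0 -> bs_norm w < rad.

Lemma Rintegral_kernel_le x : bs_norm x < rad ->
  bs_leb2.-integrable setT (EFin \o (fun w => k x w * f w)) /\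
  `|Rintegral bs_leb2 setT (fun w => k x w * f w)| <= M * (32 * rad).
Proof.
move=> hx; have r0 : 0 < 2 * rad by rewrite mulr_gt0.
apply: (@Rintegral_majorant _ _ _ bs_leb2 _ (fun w => M%:E * invdist_majorant x (2 * rad) w)%E).
- by apply: measurable_funM; [exact: measurable_k | exact: mf].
- by move=> w; rewrite mule_ge0 ?lee_fin // invdist_majorant_ge0.
- by apply: measurable_funeM; exact: measurable_invdist_majorant.
- apply: ae_mono f_le => w fw; apply: kernel_term_le_majorant => // fw0.
  exact: supdist_lt_ball hx (f_supp fw0).
- rewrite ge0_integralZl //.
  + by rewrite integral_invdist_majorant // -EFinM; congr EFin; ring.
  + exact: measurable_invdist_majorant.
  + by move=> w _; exact: invdist_majorant_ge0.
Qed.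

Lemma Rintegral_kernel_sub_dyadic x y N : 0 < bs_dist x y -> rad <= 2 ^+ N * bs_dist x y ->
  bs_norm x < rad -> bs_norm y < rad ->
  `|Rintegral bs_leb2 setT (fun w => k x w * f w) -
    Rintegral bs_leb2 setT (fun w => k y w * f w)|
   <= M * bs_dist x y * (80 + 32 * N.+1%:R).
Proof.
move=> d0 cover hx hy; set d := bs_dist x y.
have [ix _] := Rintegral_kernel_le hx; have [iy _] := Rintegral_kernel_le hy.
rewrite -(RintegralB measurableT ix iy).
under eq_fun do rewrite -mulrBl.
apply: (proj2 (@Rintegral_majorant _ _ _ bs_leb2 _
  (fun w => M%:E * kernel_sub_majorant x y d N w)%E _ _ _ _ _ _)).
- by apply: measurable_funM => //; apply: measurable_funB; exact: measurable_k.
- by move=> w; rewrite mule_ge0 ?lee_fin // kernel_sub_majorant_ge0.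
- by apply: measurable_funeM; exact: measurable_kernel_sub_majorant.
- apply: ae_mono f_le => w fw; apply: kernel_sub_term_le_majorant => //.
  + exact: k_sub_far.
  + move=> fw0; apply: le_trans (supdist_lt_ball hx (f_supp fw0)) _.
    by rewrite -/d mulrCA ler_pM2l.
- rewrite ge0_integralZl //.
  + by rewrite integral_kernel_sub_majorant // -EFinM mulrA.
  + exact: measurable_kernel_sub_majorant.
  + by move=> w _; exact: kernel_sub_majorant_ge0.
Qed.

Lemma Rintegral_kernel_sub_le x y : 0 < bs_dist x y ->
  bs_norm x < rad -> bs_norm y < rad ->
  `|Rintegral bs_leb2 setT (fun w => k x w * f w) -
    Rintegral bs_leb2 setT (fun w => k y w * f w)|
   <= M * bs_dist x y * kernel_sub_const * (1 + ln (rad / bs_dist x y)).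
Proof.
move=> d0 hx hy; have drad := bs_dist_lt_ball hx hy.
set d := bs_dist x y in d0 drad *; set L := 1 + ln (rad / d).
have [N [cover count]] := exists_dyadic_cover_log d0 drad.
apply: le_trans (Rintegral_kernel_sub_dyadic d0 cover hx hy) _.
have c0 : 0 < 1 - ln (2 : R) by rewrite subr_gt0 ln2_lt1.
have L_c0 : 1 <= L / (1 - ln 2) by rewrite ler_pdivlMr // mul1r log_term_ge // ltW.
rewrite -[X in _ <= X]mulrA; apply: ler_wpM2l; first by rewrite mulr_ge0 // ltW.
have -> : kernel_sub_const * L = 80 * (L / (1 - ln 2)) + 32 * (dyadic_log_const * L).
  by rewrite /kernel_sub_const; field; rewrite gt_eqF.
apply: lerD; last exact: ler_wpM2l.
by rewrite -[X in X <= _]mulr1 ler_wpM2l.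
Qed.

End SingularIntegral.

Section BiotSavartVelocity.
Context {R : realType}.
Implicit Types x y : R * R.
Variables (f : R * R -> R) (M rad : R).
Hypotheses (M0 : 0 <= M) (rad0 : 0 < rad) (mf : measurable_fun setT f).
Hypothesis f_le : {ae bs_leb2, forall w, `|f w| <= M}.
Hypothesis f_supp : forall w, f w != 0 -> bs_norm w < rad.

Let inv2pi_gt0 : 0 < (2 * pi)^-1 :> R.
Proof. by rewrite invr_gt0 mulr_gt0 // pi_gt0. Qed.

Let bs_kernel1_sub_far x y w : 0 < bs_dist x y -> 2 * bs_dist x y <= bs_dist x w ->
  `|bs_kernel1 x w - bs_kernel1 y w| <= 2 * bs_dist x y / bs_dist x w ^+ 2.
Proof. by move=> d0 far; case: (bs_kernel_sub_far d0 far). Qed.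

Let bs_kernel2_sub_far x y w : 0 < bs_dist x y -> 2 * bs_dist x y <= bs_dist x w ->
  `|bs_kernel2 x w - bs_kernel2 y w| <= 2 * bs_dist x y / bs_dist x w ^+ 2.
Proof. by move=> d0 far; case: (bs_kernel_sub_far d0 far). Qed.

Lemma bs_velocity_le x : bs_norm x < rad ->
  `|bs_v1 f x| <= (2 * pi)^-1 * (M * (32 * rad)) /\
  `|bs_v2 f x| <= (2 * pi)^-1 * (M * (32 * rad)).
Proof.
move=> hx; rewrite /bs_v1 /bs_v2 !normrM (gtr0_norm inv2pi_gt0) !ler_pM2l //.
have [_ v1] := Rintegral_kernel_le measurable_bs_kernel1 bs_kernel1_le M0 rad0 mf f_le f_supp hx.
have [_ v2] := Rintegral_kernel_le measurable_bs_kernel2 bs_kernel2_le M0 rad0 mf f_le f_supp hx.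
by split.
Qed.

Lemma bs_velocity_sub_le x y : 0 < bs_dist x y -> bs_norm x < rad -> bs_norm y < rad ->
  let B := (2 * pi)^-1 *
    (M * bs_dist x y * kernel_sub_const * (1 + ln (rad / bs_dist x y))) in
  `|bs_v1 f x - bs_v1 f y| <= B /\ `|bs_v2 f x - bs_v2 f y| <= B.
Proof.
move=> d0 hx hy; rewrite /bs_v1 /bs_v2 -!mulrBr !normrM (gtr0_norm inv2pi_gt0) !ler_pM2l //.
split.
- exact: (Rintegral_kernel_sub_le measurable_bs_kernel1 bs_kernel1_le bs_kernel1_sub_far
    M0 rad0 mf f_le f_supp d0 hx hy).
- exact: (Rintegral_kernel_sub_le measurable_bs_kernel2 bs_kernel2_le bs_kernel2_sub_far
    M0 rad0 mf f_le f_supp d0 hx hy).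
Qed.

End BiotSavartVelocity.

Section MovingFrame.
Context {R : realType}.
Implicit Types x y : R * R.

Lemma normr_div_le1 (a n : R) : `|a| <= n -> `|a / n| <= 1.
Proof.
move=> an; have n0 : 0 <= n := le_trans (normr_ge0 a) an.
have [->|nn0] := eqVneq n 0; first by rewrite invr0 mulr0 normr0.
have npos : 0 < n by rewrite lt_def nn0 n0.
by rewrite normrM normfV (gtr0_norm npos) ler_pdivrMr // mul1r.
Qed.

Lemma normr_sub_div_le (a b p q e : R) : 0 < p -> 0 < q ->
  `|a - b| <= e -> `|b| <= q -> `|q - p| <= e -> `|a / p - b / q| <= 2 * e / p.
Proof.
move=> p0 q0 ab bq qp.
have -> : a / p - b / q = ((a - b) + b * (q - p) / q) / p by field; rewrite !gt_eqF.
rewrite normrM normfV (gtr0_norm p0) ler_pdivrMr // divfK ?gt_eqF //.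
have : `|b * (q - p) / q| <= e.
  rewrite normrM normfV (gtr0_norm q0) ler_pdivrMr // normrM.
  by rewrite mulrC ler_pM ?normr_ge0.
by have := ler_normD (a - b) (b * (q - p) / q); lra.
Qed.

Lemma bs_direction_le x : `|x.1 / bs_norm x| <= 1 /\ `|x.2 / bs_norm x| <= 1.
Proof. by rewrite !normr_div_le1 ?bs_norm_ge_fst ?bs_norm_ge_snd. Qed.

Lemma bs_direction_sub_le (rad K : R) x y : 0 < rad -> 0 < K ->
  rad / K <= bs_norm x -> 0 < bs_norm y ->
  `|x.1 / bs_norm x - y.1 / bs_norm y| <= 2 * bs_dist x y * K / rad /\
  `|x.2 / bs_norm x - y.2 / bs_norm y| <= 2 * bs_dist x y * K / rad.
Proof.
move=> rad0 K0 hx y0; have rK : 0 < rad / K by rewrite divr_gt0.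
have x0 : 0 < bs_norm x := lt_le_trans rK hx.
have le_rK : 2 * bs_dist x y / bs_norm x <= 2 * bs_dist x y * K / rad.
  have -> : 2 * bs_dist x y * K / rad = 2 * bs_dist x y / (rad / K).
    by field; rewrite !gt_eqF.
  by rewrite ler_wpM2l ?mulr_ge0 ?bs_dist_ge0 // lef_pV2 ?posrE.
have norm_sub := bs_norm_sub_le x y.
split; apply: le_trans le_rK; apply: normr_sub_div_le => //.
- exact: bs_dist_ge_fst.
- exact: bs_norm_ge_fst.
- exact: bs_dist_ge_snd.
- exact: bs_norm_ge_snd.
Qed.

Lemma frame_sub_le (e1 e2 e1' e2' v1 v2 v1' v2' E P Q : R) :
  `|e1| <= 1 -> `|e2| <= 1 -> `|e1 - e1'| <= E -> `|e2 - e2'| <= E ->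
  `|v1 - v1'| <= P -> `|v2 - v2'| <= P -> `|v1'| <= Q -> `|v2'| <= Q ->
  `|(e1 * v1 + e2 * v2) - (e1' * v1' + e2' * v2')| +
  `|((- e2) * v1 + e1 * v2) - ((- e2') * v1' + e1' * v2')|
   <= 4 * P + 4 * (E * Q).
Proof.
move=> he1 he2 de1 de2 dv1 dv2 hv1 hv2.
have le_prod (a b A B : R) : `|a| <= A -> `|b| <= B -> `|a * b| <= A * B.
  by move=> ha hb; rewrite normrM ler_pM ?normr_ge0.
have norm4 (s1 s2 s3 s4 : R) : `|s1 + s2 + s3 + s4| <= `|s1| + `|s2| + `|s3| + `|s4|.
  apply: le_trans (ler_normD _ _) _; rewrite lerD2r.
  by apply: le_trans (ler_normD _ _) _; rewrite lerD2r ler_normD.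
have -> : (e1 * v1 + e2 * v2) - (e1' * v1' + e2' * v2') =
  e1 * (v1 - v1') + e2 * (v2 - v2') + (e1 - e1') * v1' + (e2 - e2') * v2' by ring.
have -> : ((- e2) * v1 + e1 * v2) - ((- e2') * v1' + e1' * v2') =
  (- e2) * (v1 - v1') + e1 * (v2 - v2') + (- (e2 - e2')) * v1' + (e1 - e1') * v2' by ring.
have he2' : `|- e2| <= 1 by rewrite normrN.
have de2' : `|- (e2 - e2')| <= E by rewrite normrN.
have := norm4 (e1 * (v1 - v1')) (e2 * (v2 - v2')) ((e1 - e1') * v1') ((e2 - e2') * v2').
have := norm4 ((- e2) * (v1 - v1')) (e1 * (v2 - v2')) ((- (e2 - e2')) * v1') ((e1 - e1') * v2').
have := le_prod _ _ _ _ he1 dv1; have := le_prod _ _ _ _ he2 dv2.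
have := le_prod _ _ _ _ de1 hv1; have := le_prod _ _ _ _ de2 hv2.
have := le_prod _ _ _ _ he2' dv1; have := le_prod _ _ _ _ he1 dv2.
have := le_prod _ _ _ _ de2' hv1; have := le_prod _ _ _ _ de1 hv2.
lra.
Qed.

End MovingFrame.

Lemma frame_estimate_le {R : realType} (c M d L K rad : R) :
  0 <= c -> 0 <= M -> 0 <= d -> 0 < rad -> 1 <= K -> 1 - ln 2 <= L ->
  4 * (c * (M * d * kernel_sub_const * L)) + 4 * (2 * d * K / rad * (c * (M * (32 * rad))))
  <= c * (4 * kernel_sub_const + 256 / (1 - ln 2)) * K * M * d * L.
Proof.
move=> c0 M0 d0 rad0 K1 L_ge.
have ln2 : 0 < 1 - ln (2 : R) by rewrite subr_gt0 ln2_lt1.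
have L0 : 0 <= L := le_trans (ltW ln2) L_ge.
have KS0 : 0 <= kernel_sub_const :> R.
  by rewrite addr_ge0 ?mulr_ge0 ?addr_ge0 ?divr_ge0 ?invr_ge0 ?ln_ge0 ?ler1n ?ltW.
have -> : 4 * (c * (M * d * kernel_sub_const * L)) +
    4 * (2 * d * K / rad * (c * (M * (32 * rad)))) =
    c * M * d * (4 * kernel_sub_const * L + 256 * K).
  by field; rewrite gt_eqF.
have -> : c * (4 * kernel_sub_const + 256 / (1 - ln 2)) * K * M * d * L =
    c * M * d * (4 * kernel_sub_const * (K * L) + 256 * (K * (L / (1 - ln 2)))).
  by field; rewrite gt_eqF.
rewrite ler_wpM2l ?mulr_ge0 //; apply: lerD; rewrite ler_wpM2l ?mulr_ge0 //.
  exact: ler_peMl.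
by rewrite ler_peMr ?(le_trans ler01 K1) // ler_pdivlMr // mul1r.
Qed.

Theorem corollary3p2 (R : realType) :
  exists C : R, forall (rad K : R) (f : R * R -> R),
    0 < rad -> 1 < K ->
    measurable_fun setT f ->
    (bs_Linf f < +oo)%E ->
    (forall z, ~ bs_annulus rad K z -> f z = 0) ->
    forall x y : R * R, bs_annulus rad K x -> bs_annulus rad K y -> x <> y ->
      `|bs_vr f x - bs_vr f y| + `|bs_valpha f x - bs_valpha f y|
        <= C * K * fine (bs_Linf f) * bs_dist x y
             * (1 + ln (rad / bs_dist x y)).
Proof.
exists ((2 * pi)^-1 * (4 * kernel_sub_const + 256 / (1 - ln 2))).
move=> rad K f rad0 K1 mf f_fin f_supp x y /andP[hx1 hx2] /andP[hy1 hy2] xy.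
have [M0 f_le] := bs_Linf_ae_bound f_fin; set M := fine (bs_Linf f) in M0 f_le *.
have d0 : 0 < bs_dist x y.
  by rewrite lt_def bs_dist_ge0 andbT; apply/eqP => /bs_dist_eq0.
have f_ball w : f w != 0 -> bs_norm w < rad.
  by case: (pselect (bs_annulus rad K w)) => [/andP[] | /f_supp ->]; rewrite ?eqxx.
have K0 : 0 < K by lra.
have y0 : 0 < bs_norm y by apply: lt_le_trans hy1; rewrite divr_gt0.
have [v1y v2y] := bs_velocity_le M0 rad0 mf f_le f_ball hy2.
have [v1xy v2xy] := bs_velocity_sub_le M0 rad0 mf f_le f_ball d0 hx2 hy2.
have [ex1 ex2] := bs_direction_le x.
have [exy1 exy2] := bs_direction_sub_le rad0 K0 hx1 y0.
apply: le_trans (frame_sub_le ex1 ex2 exy1 exy2 v1xy v2xy v1y v2y) _.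
apply: frame_estimate_le; [ by rewrite invr_ge0 mulr_ge0 // pi_ge0 | done | exact: ltW |
  done | exact: ltW | exact: log_term_ge (ltW (bs_dist_lt_ball hx2 hy2)) ].
Qed.
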